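(* Let $\varepsilon\neq0$. For every solution $\mathbf x:\mathbb R\to\mathbb R^3$ of the $\varepsilon$-revised system $$\dot{\mathbf x}=\mathbf x\times\mathbf m(\mathbf x)+\varepsilon[(\mathbf x\times\mathbf m(\mathbf x))\times\mathbf m(\mathbf x)],$$ the distance to the equilibrium set tends to zero in both time directions: $$d(\mathbf x(t),\mathbf E)\to0\ \text{ as } t\to+\infty\qquad\text{and}\qquad d(\mathbf x(t),\mathbf E)\to0\ \text{ as } t\to-\infty .$$
   Context: Fix constants $0<a_1<a_2<a_3$ and $a,b,c\in\mathbb R$. Set $\mathbf m(\mathbf x)=(a_1x^1+a,\ a_2x^2+b,\ a_3x^3+c)$; $\times$ is the cross product. $\mathbf E=\{\mathbf x\in\mathbb R^3:\mathbf x\times\mathbf m(\mathbf x)=\mathbf 0\}$ is the equilibrium set, and $d(\cdot,\mathbf E)$ is the Euclidean distance to $\mathbf E$. *)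

From Stdlib Require Import Reals.
From Coquelicot Require Import Coquelicot.
Open Scope R_scope.

Definition vec3 : Type := (R * R * R)%type.
Definition c1 (v : vec3) : R := fst (fst v).
Definition c2 (v : vec3) : R := snd (fst v).
Definition c3 (v : vec3) : R := snd v.

Definition vadd (u v : vec3) : vec3 := (c1 u + c1 v, c2 u + c2 v, c3 u + c3 v).
Definition vscale (k : R) (v : vec3) : vec3 := (k * c1 v, k * c2 v, k * c3 v).

Definition cross (u v : vec3) : vec3 :=
  (c2 u * c3 v - c3 u * c2 v,
   c3 u * c1 v - c1 u * c3 v,
   c1 u * c2 v - c2 u * c1 v).

Definition mvec (a1 a2 a3 a b c : R) (x : vec3) : vec3 :=
  (a1 * c1 x + a, a2 * c2 x + b, a3 * c3 x + c).

Definition revised_field (a1 a2 a3 a b c eps : R) (x : vec3) : vec3 :=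
  vadd (cross x (mvec a1 a2 a3 a b c x))
       (vscale eps (cross (cross x (mvec a1 a2 a3 a b c x)) (mvec a1 a2 a3 a b c x))).

Definition Eset (a1 a2 a3 a b c : R) (x : vec3) : Prop :=
  cross x (mvec a1 a2 a3 a b c x) = (0, 0, 0).

Definition euclid_dist (p q : vec3) : R :=
  sqrt ((c1 p - c1 q) ^ 2 + (c2 p - c2 q) ^ 2 + (c3 p - c3 q) ^ 2).

(* Distance to E: infimum of distances to points of E
   (E contains 0, so this infimum is a finite nonnegative real). *)
Definition dist_E (a1 a2 a3 a b c : R) (p : vec3) : R :=
  real (Glb_Rbar (fun r => exists q, Eset a1 a2 a3 a b c q /\ r = euclid_dist p q)).

Definition is_solution (a1 a2 a3 a b c eps : R) (x : R -> vec3) : Prop :=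
  forall t : R,
    is_derive (fun s => c1 (x s)) t (c1 (revised_field a1 a2 a3 a b c eps (x t))) /\
    is_derive (fun s => c2 (x s)) t (c2 (revised_field a1 a2 a3 a b c eps (x t))) /\
    is_derive (fun s => c3 (x s)) t (c3 (revised_field a1 a2 a3 a b c eps (x t))).

From Pilot Require Import Defs.
From Stdlib Require Import Reals Lra Psatz Lia Classical ClassicalEpsilon.
From Coquelicot Require Import Coquelicot.
(* Coquelicot also defines [c1]; re-import so that [c1], [c2], [c3] are the coordinates. *)
Import Defs.
Open Scope R_scope.

(* The energy H(x) = sum_i a_i (x^i)^2 / 2 + (a, b, c).x has gradient m(x), which is orthogonal
   to the field, so H is conserved; as all a_i > 0, every solution stays in a fixed box.  Along
   solutions d/dt |x|^2 = -2 eps |x * m(x)|^2, so |x|^2 is monotone and bounded, and Barbalat's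
   argument (the residual |x * m(x)|^2 has bounded derivative on the box) sends the residual to 0
   in both time directions.  By compactness of the box, a small residual forces a small distance
   to E. *)

(** * Barbalat's lemma *)

Lemma is_derive_MVT (f df : R -> R) : (forall t, is_derive f t (df t)) ->
  forall u w, u <= w -> exists z, u <= z <= w /\ f w - f u = df z * (w - u).
Proof.
  intros Hd u w Huw.
  destruct (MVT_gen f u w df) as [z [Hz Heq]].
  - intros; apply Hd.
  - intros; apply continuity_pt_filterlim, (ex_derive_continuous (V := R_NormedModule) f).
    eexists; apply Hd.
  - exists z; split; [|exact Heq].
    rewrite Rmin_left, Rmax_right in Hz by lra; exact Hz.
Qed.

Lemma is_derive_0_const (f : R -> R) : (forall t, is_derive f t 0) -> forall t, f t = f 0.
Proof.
  intros Hd t.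
  destruct (Rle_dec 0 t).
  - destruct (is_derive_MVT f (fun _ => 0) Hd 0 t) as [z [_ Hz]]; lra.
  - destruct (is_derive_MVT f (fun _ => 0) Hd t 0) as [z [_ Hz]]; lra.
Qed.

Lemma is_derive_nonneg_nondecreasing (f df : R -> R) :
  (forall t, is_derive f t (df t)) -> (forall t, 0 <= df t) ->
  forall u w, u <= w -> f u <= f w.
Proof.
  intros Hd Hpos u w Huw.
  destruct (is_derive_MVT f df Hd u w Huw) as [z [_ Hz]].
  assert (0 <= df z * (w - u)) by (apply Rmult_le_pos; [apply Hpos|lra]); lra.
Qed.

Lemma is_derive_comp_opp (f : R -> R) (s d : R) :
  is_derive f (- s) d -> is_derive (fun u => f (- u)) s (- d).
Proof.
  intro H.
  assert (Hopp : is_derive (fun u : R => - u) s (-1)) by (auto_derive; auto; ring).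
  pose proof (is_derive_comp f (fun u => - u) s d (-1) H Hopp) as Hc.
  replace (- d) with (-1 * d) by ring; exact Hc.
Qed.

Lemma bounded_nondecreasing_increments (N : R -> R) (B : R) :
  (forall u w, u <= w -> N u <= N w) -> (forall t, N t <= B) ->
  forall e, 0 < e -> exists T, forall u w, T <= u -> u <= w -> N w - N u < e.
Proof.
  intros Hmon HB e He.
  destruct (completeness (fun y => exists t, y = N t)) as [s [Hub Hlub]].
  - exists B; intros y [t ->]; apply HB.
  - exists (N 0), 0; reflexivity.
  - assert (HT : exists T, s - e < N T).
    { apply NNPP; intro Hno.
      assert (s <= s - e); [|lra].
      apply Hlub; intros y [t ->].
      destruct (Rlt_le_dec (s - e) (N t)); [exfalso; eauto|lra]. }
    destruct HT as [T HT]; exists T; intros u w HTu Huw.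
    pose proof (Hmon T u HTu); pose proof (Hub (N w) (ex_intro _ w eq_refl)); lra.
Qed.

Lemma lipschitz_stays_above (g dg : R -> R) (L d t z : R) :
  (forall t, is_derive g t (dg t)) -> (forall t, Rabs (dg t) <= L) -> 0 < d ->
  d <= g t -> t <= z <= t + d / (2 * (L + 1)) -> d / 2 <= g z.
Proof.
  intros Hd HL Hd0 Hgt Hz.
  assert (HL0 : 0 <= L) by (pose proof (Rabs_pos (dg 0)); pose proof (HL 0); lra).
  destruct (is_derive_MVT g dg Hd t z (proj1 Hz)) as [w [_ Hw]].
  pose proof (proj1 (Rabs_le_between _ _) (HL w)).
  assert (Hstep : L * (z - t) <= d / 2).
  { apply Rle_trans with (L * (d / (2 * (L + 1)))); [apply Rmult_le_compat_l; lra|].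
    apply Rmult_le_reg_r with (2 * (L + 1)); [lra|].
    replace (L * (d / (2 * (L + 1))) * (2 * (L + 1))) with (L * d) by (field; lra).
    nra. }
  nra.
Qed.

Lemma barbalat_pos (N g dg : R -> R) (k B L : R) : 0 < k ->
  (forall t, is_derive N t (k * g t)) -> (forall t, N t <= B) ->
  (forall t, 0 <= g t) -> (forall t, is_derive g t (dg t)) ->
  (forall t, Rabs (dg t) <= L) -> is_lim g p_infty 0.
Proof.
  intros Hk HN HB Hg Hdg HL.
  apply is_lim_spec; intros [d Hd]; simpl.
  assert (HL0 : 0 <= L) by (pose proof (Rabs_pos (dg 0)); pose proof (HL 0); lra).
  set (h := d / (2 * (L + 1))).
  assert (Hh : 0 < h) by (apply Rdiv_lt_0_compat; lra).
  assert (Hmon : forall u w, u <= w -> N u <= N w).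
  { apply (is_derive_nonneg_nondecreasing N (fun t => k * g t) HN).
    intro t; apply Rmult_le_pos; [lra|apply Hg]. }
  assert (Hkdh : 0 < k * (d / 2) * h) by (apply Rmult_lt_0_compat; [apply Rmult_lt_0_compat|]; lra).
  destruct (bounded_nondecreasing_increments N B Hmon HB _ Hkdh) as [T HT].
  (* If [d <= g t] with [T < t], then [g >= d / 2] on [[t, t + h]], so [N] would increase there
     by at least [k d h / 2]. *)
  exists T; intros t Ht.
  rewrite Rminus_0_r, Rabs_pos_eq by apply Hg.
  apply Rnot_le_lt; intro Hge.
  destruct (is_derive_MVT N (fun t => k * g t) HN t (t + h)) as [z [Hz Hinc]]; [lra|].
  pose proof (lipschitz_stays_above g dg L d t z Hdg HL Hd Hge Hz).
  assert (k * (d / 2) * h <= k * g z * (t + h - t)).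
  { replace (t + h - t) with h by ring.
    apply Rmult_le_compat_r; [lra|apply Rmult_le_compat_l; lra]. }
  pose proof (HT t (t + h) (Rlt_le _ _ Ht) ltac:(lra)); lra.
Qed.

Lemma barbalat_p_infty (N g dg : R -> R) (k B L : R) : k <> 0 ->
  (forall t, is_derive N t (k * g t)) -> (forall t, Rabs (N t) <= B) ->
  (forall t, 0 <= g t) -> (forall t, is_derive g t (dg t)) ->
  (forall t, Rabs (dg t) <= L) -> is_lim g p_infty 0.
Proof.
  intros Hk HN HB Hg Hdg HL.
  destruct (Rlt_le_dec 0 k) as [Hpos|Hneg].
  - apply (barbalat_pos N g dg k B L); auto.
    intro t; exact (proj2 (proj1 (Rabs_le_between _ _) (HB t))).
  - apply (barbalat_pos (fun t => - N t) g dg (- k) B L); auto; [lra| |].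
    + intro t; replace (- k * g t) with (- (k * g t)) by ring.
      apply (is_derive_opp N), HN.
    + intro t; pose proof (proj1 (Rabs_le_between _ _) (HB t)); lra.
Qed.

Lemma barbalat (N g dg : R -> R) (k B L : R) : k <> 0 ->
  (forall t, is_derive N t (k * g t)) -> (forall t, Rabs (N t) <= B) ->
  (forall t, 0 <= g t) -> (forall t, is_derive g t (dg t)) ->
  (forall t, Rabs (dg t) <= L) -> is_lim g p_infty 0 /\ is_lim g m_infty 0.
Proof.
  intros Hk HN HB Hg Hdg HL; split; [exact (barbalat_p_infty N g dg k B L Hk HN HB Hg Hdg HL)|].
  (* The limit at [-oo] is the limit at [+oo] of the time-reversed data. *)
  assert (Hrev : is_lim (fun s => g (- s)) p_infty 0).
  { apply (barbalat_p_infty (fun s => N (- s)) _ (fun s => - dg (- s)) (- k) B L); auto; [lra| | |].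
    - intro t; replace (- k * g (- t)) with (- (k * g (- t))) by ring.
      apply is_derive_comp_opp, HN.
    - intro t; apply is_derive_comp_opp, Hdg.
    - intro t; rewrite Rabs_Ropp; apply HL. }
  apply (is_lim_ext (fun t => g (- - t))); [intro t; rewrite Ropp_involutive; reflexivity|].
  apply (is_lim_comp (fun s => g (- s)) Ropp m_infty 0 p_infty); [exact Hrev| |].
  - apply (is_lim_opp (fun y => y) m_infty m_infty), is_lim_id.
  - exists 0; intros; discriminate.
Qed.

(** * Compactness of boxes and limits *)

Lemma Un_cv_const (l : R) : Un_cv (fun _ : nat => l) l.
Proof. intros e He; exists 0%nat; intros; unfold Rdist; rewrite Rminus_eq_0, Rabs_R0; exact He. Qed.

Ltac Un_cv_poly :=
  repeat first [apply CV_plus | apply CV_opp | apply CV_mult | apply Un_cv_const | assumption].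

Lemma Un_cv_inv_succ : Un_cv (fun n => / (INR n + 1)) 0.
Proof.
  intros e He; destruct (archimed_cor1 e He) as [N [HN HN0]].
  exists N; intros n Hn; unfold Rdist.
  pose proof (pos_INR n); pose proof (lt_0_INR N HN0); pose proof (le_INR _ _ Hn).
  rewrite Rminus_0_r, Rabs_pos_eq by (apply Rlt_le, Rinv_0_lt_compat; lra).
  apply Rle_lt_trans with (/ INR N); [apply Rinv_le_contravar; lra|exact HN].
Qed.

Lemma Un_cv_subseq (u : nat -> R) (l : R) (psi : nat -> nat) :
  (forall k, (k <= psi k)%nat) -> Un_cv u l -> Un_cv (fun k => u (psi k)) l.
Proof.
  intros Hpsi Hu e He; destruct (Hu e He) as [N HN].
  exists N; intros n Hn; apply HN; specialize (Hpsi n); lia.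
Qed.

(* Subsequences are encoded by index maps with [k <= psi k], which is all that
   [Un_cv_subseq] needs and is stable under composition. *)
Lemma bounded_seq_cv_subseq (u : nat -> R) (M : R) : (forall n, Rabs (u n) <= M) ->
  exists psi : nat -> nat, (forall k, (k <= psi k)%nat) /\ exists l, Un_cv (fun k => u (psi k)) l.
Proof.
  intro Hu.
  destruct (Bolzano_Weierstrass u (fun r => - M <= r <= M) (compact_P3 _ _)) as [l Hl].
  { intro n; apply Rabs_le_between, Hu. }
  assert (Hclose : forall k : nat, exists p, (k <= p)%nat /\ Rabs (u p - l) < / (INR k + 1)).
  { intro k.
    assert (Hpos : 0 < / (INR k + 1)) by (apply Rinv_0_lt_compat; pose proof (pos_INR k); lra).
    destruct (Hl (fun r => Rabs (r - l) < / (INR k + 1)) k) as [p Hp].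
    - exists (mkposreal _ Hpos); intros r Hr; exact Hr.
    - exists p; exact Hp. }
  destruct (choice _ Hclose) as [psi Hpsi].
  exists psi; split; [intro k; apply Hpsi|exists l].
  intros e He; destruct (Un_cv_inv_succ e He) as [N HN].
  exists N; intros n Hn; specialize (HN n Hn); unfold Rdist in *.
  rewrite Rminus_0_r, Rabs_pos_eq in HN
    by (apply Rlt_le, Rinv_0_lt_compat; pose proof (pos_INR n); lra).
  pose proof (proj2 (Hpsi n)); lra.
Qed.

Definition in_box (M : R) (y : vec3) : Prop :=
  Rabs (c1 y) <= M /\ Rabs (c2 y) <= M /\ Rabs (c3 y) <= M.

Lemma box_seq_cv_subseq (M : R) (y : nat -> vec3) : (forall n, in_box M (y n)) ->
  exists (psi : nat -> nat) (p : vec3), (forall k, (k <= psi k)%nat) /\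
    Un_cv (fun k => c1 (y (psi k))) (c1 p) /\ Un_cv (fun k => c2 (y (psi k))) (c2 p) /\
    Un_cv (fun k => c3 (y (psi k))) (c3 p).
Proof.
  intro Hy.
  destruct (bounded_seq_cv_subseq (fun n => c1 (y n)) M) as [f1 [Hf1 [p1 Hp1]]];
    [intro n; apply Hy|].
  destruct (bounded_seq_cv_subseq (fun n => c2 (y (f1 n))) M) as [f2 [Hf2 [p2 Hp2]]];
    [intro n; apply Hy|].
  destruct (bounded_seq_cv_subseq (fun n => c3 (y (f1 (f2 n)))) M) as [f3 [Hf3 [p3 Hp3]]];
    [intro n; apply Hy|].
  exists (fun k => f1 (f2 (f3 k))), (p1, p2, p3); simpl; split; [|split; [|split]].
  - intro k; specialize (Hf3 k); specialize (Hf2 (f3 k)); specialize (Hf1 (f2 (f3 k))); lia.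
  - apply (Un_cv_subseq (fun k => c1 (y (f1 k))) p1 (fun k => f2 (f3 k))); [|exact Hp1].
    intro k; specialize (Hf3 k); specialize (Hf2 (f3 k)); lia.
  - exact (Un_cv_subseq _ _ f3 Hf3 Hp2).
  - exact Hp3.
Qed.

Definition seq_continuous (F : vec3 -> R) : Prop :=
  forall (y : nat -> vec3) (p : vec3),
    Un_cv (fun n => c1 (y n)) (c1 p) -> Un_cv (fun n => c2 (y n)) (c2 p) ->
    Un_cv (fun n => c3 (y n)) (c3 p) -> Un_cv (fun n => F (y n)) (F p).

Lemma seq_continuous_bounded_on_box (F : vec3 -> R) (M : R) : seq_continuous F ->
  exists L, forall y, in_box M y -> Rabs (F y) <= L.
Proof.
  intro HF; apply NNPP; intro Hunb.
  assert (Hbig : forall n : nat, exists y, in_box M y /\ INR n < Rabs (F y)).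
  { intro n; apply NNPP; intro Hn; apply Hunb; exists (INR n); intros y Hy.
    apply Rnot_lt_le; intro Hlt; apply Hn; exists y; auto. }
  destruct (choice _ Hbig) as [ys Hys].
  destruct (box_seq_cv_subseq M ys) as [psi [p [Hpsi [H1 [H2 H3]]]]]; [apply Hys|].
  destruct (HF _ p H1 H2 H3 1 Rlt_0_1) as [N HN].
  destruct (INR_unbounded (Rabs (F p) + 1)) as [n Hn].
  specialize (HN (max N n) (Nat.le_max_l _ _)); unfold Rdist in HN.
  pose proof (proj2 (Hys (psi (max N n)))).
  pose proof (le_INR _ _ (Nat.le_trans _ _ _ (Nat.le_max_r N n) (Hpsi (max N n)))).
  pose proof (Rabs_triang_inv (F (ys (psi (max N n)))) (F p)); lra.
Qed.

Lemma euclid_dist_lt (p q : vec3) (r : R) : Rabs (c1 p - c1 q) < r / 2 ->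
  Rabs (c2 p - c2 q) < r / 2 -> Rabs (c3 p - c3 q) < r / 2 -> euclid_dist p q < r.
Proof.
  intros H1 H2 H3.
  assert (Hr : 0 < r) by (pose proof (Rabs_pos (c1 p - c1 q)); lra).
  assert (Hsq : forall u, Rabs u < r / 2 -> u ^ 2 <= r * r / 4).
  { intros u Hu; rewrite <- (pow2_abs u).
    pose proof (Rabs_pos u); nra. }
  pose proof (Hsq _ H1); pose proof (Hsq _ H2); pose proof (Hsq _ H3).
  unfold euclid_dist; rewrite <- (sqrt_Rsqr r) by lra.
  apply sqrt_lt_1; [pose proof (pow2_ge_0 (c1 p - c1 q)); pose proof (pow2_ge_0 (c2 p - c2 q));
    pose proof (pow2_ge_0 (c3 p - c3 q)); lra|apply Rle_0_sqr|unfold Rsqr; nra].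
Qed.

Lemma filterlim_0_of_modulus {T : Type} (F : (T -> Prop) -> Prop) {FF : Filter F}
  (u v : T -> R) : (forall t, 0 <= v t) ->
  (forall d, 0 < d -> exists eta, 0 < eta /\ forall t, u t < eta -> v t < d) ->
  filterlim u F (locally 0) -> filterlim v F (locally 0).
Proof.
  intros Hv Hmod Hu; apply filterlim_locally; intros [d Hd].
  destruct (Hmod d Hd) as [eta [Heta Huv]].
  apply (filter_imp (fun t => ball 0 (mkposreal _ Heta) (u t)));
    [|exact (proj1 (filterlim_locally u 0) Hu _)].
  intros t Ht; change (Rabs (v t - 0) < d); change (Rabs (u t - 0) < eta) in Ht.
  rewrite Rminus_0_r, Rabs_pos_eq by apply Hv.
  apply Huv; pose proof (Rle_abs (u t - 0)); lra.
Qed.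

(** * Derivatives of vector expressions *)

Definition dot (u v : vec3) : R := c1 u * c1 v + c2 u * c2 v + c3 u * c3 v.

Lemma dot_self_nonneg (u : vec3) : 0 <= dot u u.
Proof.
  unfold dot; pose proof (Rle_0_sqr (c1 u)); pose proof (Rle_0_sqr (c2 u));
  pose proof (Rle_0_sqr (c3 u)); unfold Rsqr in *; lra.
Qed.

Definition is_vderive (u : R -> vec3) (t : R) (du : vec3) : Prop :=
  is_derive (fun s => c1 (u s)) t (c1 du) /\ is_derive (fun s => c2 (u s)) t (c2 du) /\
  is_derive (fun s => c3 (u s)) t (c3 du).

Lemma is_derive_eq (f : R -> R) (t d d' : R) : is_derive f t d -> d = d' -> is_derive f t d'.
Proof. intros H <-; exact H. Qed.

Lemma is_derive_Rmult (f g : R -> R) (t df dg : R) : is_derive f t df -> is_derive g t dg ->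
  is_derive (fun s => f s * g s) t (df * g t + f t * dg).
Proof. intros Hf Hg; exact (is_derive_mult f g t df dg Hf Hg Rmult_comm). Qed.

Lemma is_derive_dot (u v : R -> vec3) (t : R) (du dv : vec3) :
  is_vderive u t du -> is_vderive v t dv ->
  is_derive (fun s => dot (u s) (v s)) t (dot du (v t) + dot (u t) dv).
Proof.
  intros [H1 [H2 H3]] [K1 [K2 K3]].
  apply (is_derive_eq _ _ _ _ (is_derive_plus _ _ t _ _ (is_derive_plus _ _ t _ _
    (is_derive_Rmult _ _ t _ _ H1 K1) (is_derive_Rmult _ _ t _ _ H2 K2))
    (is_derive_Rmult _ _ t _ _ H3 K3))).
  unfold dot, plus; simpl; ring.
Qed.

Lemma is_vderive_cross (u v : R -> vec3) (t : R) (du dv : vec3) :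
  is_vderive u t du -> is_vderive v t dv ->
  is_vderive (fun s => cross (u s) (v s)) t (vadd (cross du (v t)) (cross (u t) dv)).
Proof.
  intros [H1 [H2 H3]] [K1 [K2 K3]]; split; [|split].
  - apply (is_derive_eq _ _ _ _ (is_derive_minus _ _ t _ _
      (is_derive_Rmult _ _ t _ _ H2 K3) (is_derive_Rmult _ _ t _ _ H3 K2))).
    unfold vadd, cross, minus, plus, opp, c1, c2, c3; simpl; ring.
  - apply (is_derive_eq _ _ _ _ (is_derive_minus _ _ t _ _
      (is_derive_Rmult _ _ t _ _ H3 K1) (is_derive_Rmult _ _ t _ _ H1 K3))).
    unfold vadd, cross, minus, plus, opp, c1, c2, c3; simpl; ring.
  - apply (is_derive_eq _ _ _ _ (is_derive_minus _ _ t _ _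
      (is_derive_Rmult _ _ t _ _ H1 K2) (is_derive_Rmult _ _ t _ _ H2 K1))).
    unfold vadd, cross, minus, plus, opp, c1, c2, c3; simpl; ring.
Qed.

Lemma is_vderive_mvec (p1 p2 p3 q1 q2 q3 : R) (u : R -> vec3) (t : R) (du : vec3) :
  is_vderive u t du ->
  is_vderive (fun s => mvec p1 p2 p3 q1 q2 q3 (u s)) t (mvec p1 p2 p3 0 0 0 du).
Proof.
  intros [H1 [H2 H3]]; split; [|split].
  - apply (is_derive_eq _ _ _ _
      (is_derive_plus _ _ t _ _ (is_derive_scal _ t p1 _ H1) (is_derive_const q1 t))).
    unfold mvec, plus, zero, c1, c2, c3; simpl; ring.
  - apply (is_derive_eq _ _ _ _
      (is_derive_plus _ _ t _ _ (is_derive_scal _ t p2 _ H2) (is_derive_const q2 t))).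
    unfold mvec, plus, zero, c1, c2, c3; simpl; ring.
  - apply (is_derive_eq _ _ _ _
      (is_derive_plus _ _ t _ _ (is_derive_scal _ t p3 _ H3) (is_derive_const q3 t))).
    unfold mvec, plus, zero, c1, c2, c3; simpl; ring.
Qed.

(** * The revised system *)

Lemma quadratic_lower_bound (lo hi v z : R) : 0 < lo -> lo <= hi ->
  lo / 4 * z ^ 2 - v ^ 2 / lo <= hi / 2 * z ^ 2 + v * z.
Proof.
  intros Hlo Hhi.
  apply Rmult_le_reg_l with (4 * lo); [lra|].
  replace (4 * lo * (lo / 4 * z ^ 2 - v ^ 2 / lo)) with (lo * lo * z ^ 2 - 4 * v ^ 2)
    by (field; lra).
  replace (4 * lo * (hi / 2 * z ^ 2 + v * z)) with (2 * lo * hi * z ^ 2 + 4 * lo * v * z)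
    by field.
  pose proof (pow2_ge_0 (lo * z + 2 * v)).
  assert (0 <= lo * (hi - lo) * z ^ 2) by (apply Rmult_le_pos; [nra|apply pow2_ge_0]).
  nra.
Qed.

Lemma in_box_of_dot (y : vec3) (r : R) : dot y y <= r -> in_box (1 + r) y.
Proof.
  unfold dot, in_box; intro Hr.
  assert (Habs : forall z, z * z <= r -> Rabs z <= 1 + r).
  { intros z Hz; apply Rabs_le.
    pose proof (Rle_0_sqr (z - 1 / 2)); pose proof (Rle_0_sqr (z + 1 / 2)); unfold Rsqr in *.
    split; nra. }
  pose proof (Rle_0_sqr (c1 y)); pose proof (Rle_0_sqr (c2 y)); pose proof (Rle_0_sqr (c3 y)).
  unfold Rsqr in *.
  split; [|split]; apply Habs; lra.
Qed.

Section System.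

Variables a1 a2 a3 a b c eps : R.

Local Notation m := (mvec a1 a2 a3 a b c).
Local Notation rhs := (revised_field a1 a2 a3 a b c eps).

Definition energy (y : vec3) : R := dot (mvec (a1 / 2) (a2 / 2) (a3 / 2) a b c y) y.

Definition residual (y : vec3) : R := dot (cross y (m y)) (cross y (m y)).

(* The derivative of [residual] along the flow: (x * m(x))' = f * m(x) + x * diag(a1, a2, a3) f. *)
Definition residual_rate (y : vec3) : R :=
  2 * dot (cross y (m y)) (vadd (cross (rhs y) (m y)) (cross y (mvec a1 a2 a3 0 0 0 (rhs y)))).

(* [m] is the gradient of [energy], and both terms of the field are orthogonal to [m]. *)
Lemma dot_m_rhs (y : vec3) : dot (m y) (rhs y) = 0.
Proof. unfold dot, revised_field, vadd, vscale, cross, mvec, c1, c2, c3; simpl; ring. Qed.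

Lemma dot_rhs (y : vec3) : dot y (rhs y) = - eps * residual y.
Proof. unfold residual, dot, revised_field, vadd, vscale, cross, mvec, c1, c2, c3; simpl; ring. Qed.

Lemma energy_coercive (y : vec3) : 0 < a1 -> a1 <= a2 -> a1 <= a3 ->
  a1 / 4 * dot y y - (a ^ 2 + b ^ 2 + c ^ 2) / a1 <= energy y.
Proof.
  intros Ha1 Ha12 Ha13.
  pose proof (quadratic_lower_bound a1 a1 a (c1 y) Ha1 (Rle_refl _)).
  pose proof (quadratic_lower_bound a1 a2 b (c2 y) Ha1 Ha12).
  pose proof (quadratic_lower_bound a1 a3 c (c3 y) Ha1 Ha13).
  replace ((a ^ 2 + b ^ 2 + c ^ 2) / a1) with (a ^ 2 / a1 + b ^ 2 / a1 + c ^ 2 / a1)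
    by (field; lra).
  unfold energy, dot, mvec, c1, c2, c3 in *; simpl in *; nra.
Qed.

Lemma residual_le_0_Eset (q : vec3) : residual q <= 0 -> Eset a1 a2 a3 a b c q.
Proof.
  unfold residual, Eset, dot; destruct (cross q (m q)) as [[w1 w2] w3].
  unfold c1, c2, c3; simpl; intro H.
  assert (w1 = 0) by nra; assert (w2 = 0) by nra; assert (w3 = 0) by nra; subst; reflexivity.
Qed.

Lemma Eset_origin : Eset a1 a2 a3 a b c (0, 0, 0).
Proof. unfold Eset, cross, mvec, c1, c2, c3; simpl; f_equal; [f_equal|]; ring. Qed.

Lemma dist_E_bounds (y q : vec3) : Eset a1 a2 a3 a b c q ->
  0 <= dist_E a1 a2 a3 a b c y <= euclid_dist y q.
Proof.
  intro Hq; unfold dist_E.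
  set (S := fun r => exists q, Eset a1 a2 a3 a b c q /\ r = euclid_dist y q).
  destruct (Glb_Rbar_correct S) as [Hlb Hglb].
  assert (Hle : Rbar_le (Glb_Rbar S) (euclid_dist y q)) by (apply Hlb; exists q; auto).
  assert (Hge : Rbar_le 0 (Glb_Rbar S)) by (apply Hglb; intros r [q' [_ ->]]; apply sqrt_pos).
  destruct (Glb_Rbar S); simpl in *; tauto.
Qed.

Lemma residual_seq_continuous : seq_continuous residual.
Proof.
  intros y p H1 H2 H3.
  unfold residual, dot, cross, mvec, c1, c2, c3 in *; simpl in *; Un_cv_poly.
Qed.

Lemma residual_rate_seq_continuous : seq_continuous residual_rate.
Proof.
  intros y p H1 H2 H3.
  unfold residual_rate, revised_field, dot, vadd, vscale, cross, mvec, c1, c2, c3 in *; simpl in *;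
  Un_cv_poly.
Qed.

(* A sequence in the box with vanishing residual staying [delta]-away from [E] would have a
   limit point in [E]. *)
Lemma residual_small_dist_E_small (M delta : R) : 0 < delta ->
  exists eta, 0 < eta /\
    forall y, in_box M y -> residual y < eta -> dist_E a1 a2 a3 a b c y < delta.
Proof.
  intro Hdelta; apply NNPP; intro Hno.
  assert (Hbad : forall n : nat, exists y, in_box M y /\ residual y < / (INR n + 1) /\
    delta <= dist_E a1 a2 a3 a b c y).
  { intro n; apply NNPP; intro Hn; apply Hno; exists (/ (INR n + 1)); split.
    - apply Rinv_0_lt_compat; pose proof (pos_INR n); lra.
    - intros y Hy Hres; apply Rnot_le_lt; intro Hd; apply Hn; exists y; auto. }
  destruct (choice _ Hbad) as [ys Hys].
  destruct (box_seq_cv_subseq M ys) as [psi [p [Hpsi [H1 [H2 H3]]]]]; [apply Hys|].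
  assert (HEp : Eset a1 a2 a3 a b c p).
  { apply residual_le_0_Eset.
    refine (Rle_cv_lim _ (residual_seq_continuous _ p H1 H2 H3) Un_cv_inv_succ).
    intro k; destruct (Hys (psi k)) as [_ [Hres _]]; apply Rlt_le, (Rlt_le_trans _ _ _ Hres).
    pose proof (pos_INR k); pose proof (le_INR _ _ (Hpsi k)).
    apply Rinv_le_contravar; lra. }
  assert (Hd2 : 0 < delta / 2) by lra.
  destruct (H1 _ Hd2) as [N1 HN1], (H2 _ Hd2) as [N2 HN2], (H3 _ Hd2) as [N3 HN3].
  set (n := max N1 (max N2 N3)).
  pose proof (euclid_dist_lt (ys (psi n)) p delta (HN1 n ltac:(lia)) (HN2 n ltac:(lia))
    (HN3 n ltac:(lia))).
  pose proof (proj2 (dist_E_bounds (ys (psi n)) p HEp)).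
  pose proof (proj2 (proj2 (Hys (psi n)))); lra.
Qed.

Variable x : R -> vec3.
Hypothesis hx : is_solution a1 a2 a3 a b c eps x.

(* Stated with [rhs (x t)] itself as derivative, so that unification does not unfold it. *)
Let hx_vderive (t : R) : is_vderive x t (rhs (x t)) := hx t.

Lemma energy_derive (t : R) : is_derive (fun s => energy (x s)) t 0.
Proof.
  apply (is_derive_eq _ _ _ _ (is_derive_dot _ _ t _ _
    (is_vderive_mvec _ _ _ _ _ _ x t _ (hx_vderive t)) (hx_vderive t))).
  transitivity (dot (m (x t)) (rhs (x t))); [|apply dot_m_rhs].
  generalize (rhs (x t)) (x t); intros f y.
  unfold dot, mvec, c1, c2, c3; simpl; field.
Qed.

Lemma sqnorm_derive (t : R) :
  is_derive (fun s => dot (x s) (x s)) t (-2 * eps * residual (x t)).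
Proof.
  apply (is_derive_eq _ _ _ _ (is_derive_dot _ _ t _ _ (hx_vderive t) (hx_vderive t))).
  pose proof (dot_rhs (x t)); unfold dot in *; lra.
Qed.

Lemma residual_derive (t : R) : is_derive (fun s => residual (x s)) t (residual_rate (x t)).
Proof.
  pose proof (is_vderive_cross _ _ t _ _ (hx_vderive t)
    (is_vderive_mvec a1 a2 a3 a b c x t _ (hx_vderive t))) as Hw.
  apply (is_derive_eq _ _ _ _ (is_derive_dot _ _ t _ _ Hw Hw)).
  unfold residual_rate, dot; ring.
Qed.

Lemma solution_sqnorm_bounded : 0 < a1 -> a1 <= a2 -> a1 <= a3 ->
  exists r, forall t, dot (x t) (x t) <= r.
Proof.
  intros Ha1 Ha12 Ha13.
  exists (4 / a1 * (energy (x 0) + (a ^ 2 + b ^ 2 + c ^ 2) / a1)); intro t.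
  pose proof (energy_coercive (x t) Ha1 Ha12 Ha13) as Hcoer.
  rewrite (is_derive_0_const _ energy_derive t) in Hcoer.
  apply Rmult_le_reg_l with (a1 / 4); [lra|].
  replace (a1 / 4 * (4 / a1 * (energy (x 0) + (a ^ 2 + b ^ 2 + c ^ 2) / a1)))
    with (energy (x 0) + (a ^ 2 + b ^ 2 + c ^ 2) / a1) by (field; lra).
  lra.
Qed.

Lemma dist_E_lim_of_residual_lim (M : R) (F : (R -> Prop) -> Prop) {FF : Filter F} :
  (forall t, in_box M (x t)) ->
  filterlim (fun t => residual (x t)) F (locally 0) ->
  filterlim (fun t => dist_E a1 a2 a3 a b c (x t)) F (locally 0).
Proof.
  intro Hbox; apply (@filterlim_0_of_modulus R F FF).
  - intro t; exact (proj1 (dist_E_bounds (x t) _ Eset_origin)).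
  - intros d Hd; destruct (residual_small_dist_E_small M d Hd) as [eta [Heta Hsmall]].
    exists eta; split; [exact Heta|intro t; apply Hsmall, Hbox].
Qed.

End System.

Theorem theorem5p3 (a1 a2 a3 a b c eps : R)
  (h1 : 0 < a1) (h12 : a1 < a2) (h23 : a2 < a3) (heps : eps <> 0)
  (x : R -> vec3) (hx : is_solution a1 a2 a3 a b c eps x) :
  is_lim (fun t => dist_E a1 a2 a3 a b c (x t)) p_infty 0 /\
  is_lim (fun t => dist_E a1 a2 a3 a b c (x t)) m_infty 0.
Proof.
  destruct (solution_sqnorm_bounded a1 a2 a3 a b c eps x hx h1 ltac:(lra) ltac:(lra)) as [r Hr].
  pose proof (fun t => in_box_of_dot (x t) r (Hr t)) as Hbox.
  destruct (seq_continuous_bounded_on_box _ (1 + r)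
    (residual_rate_seq_continuous a1 a2 a3 a b c eps)) as [L HL].
  destruct (barbalat (fun t => dot (x t) (x t)) (fun t => residual a1 a2 a3 a b c (x t))
    (fun t => residual_rate a1 a2 a3 a b c eps (x t)) (-2 * eps) r L) as [Hp Hm].
  - lra.
  - exact (sqnorm_derive a1 a2 a3 a b c eps x hx).
  - intro t; rewrite Rabs_pos_eq by apply dot_self_nonneg; apply Hr.
  - intro t; apply dot_self_nonneg.
  - exact (residual_derive a1 a2 a3 a b c eps x hx).
  - intro t; apply HL, Hbox.
  - split; [exact (dist_E_lim_of_residual_lim a1 a2 a3 a b c x (1 + r) _ Hbox Hp)
           |exact (dist_E_lim_of_residual_lim a1 a2 a3 a b c x (1 + r) _ Hbox Hm)].
Qed.
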